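(* Let $G=(V,E)$ be an undirected graph, $X\subset V$, $Y=V\setminus X$, $f\in L^\infty(X)$, $g\in L^\infty(Y)$, and let $u:V\to\mathbb{R}$ satisfy $\Delta_\infty u(x)=f(x)$ for all $x\in X$ and $u=g$ on $Y$. Let $x\in X$ and $y\sim x$. Then for every positive integer $N$ with $N\le d(Y,x)$, \[ u(y)-u(x)\ \le\ \frac{u(x)-\inf_V u}{N}+\frac{(N+1)\sup_X f}{2}. \]
   Context: For $x,y\in V$ write $x\sim y$ if $\{x,y\}\in E$; $d(Y,x)$ is the combinatorial distance, i.e. the least length $n$ of a path $Y\ni x_0\sim\cdots\sim x_n=x$. The discrete infinity Laplacian is $\Delta_\infty u(x)=\inf_{z\sim x}u(z)+\sup_{z\sim x}u(z)-2u(x)$. *)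

From mathcomp Require Import all_boot all_order all_algebra.
From mathcomp Require Import all_classical all_reals.
From mathcomp Require Export ereal.
Set Implicit Arguments. Unset Strict Implicit. Unset Printing Implicit Defensive.
Import Order.TTheory GRing.Theory Num.Theory.
Local Open Scope classical_set_scope.
Local Open Scope ring_scope.
Local Open Scope ereal_scope.

(* A graph on vertex type V is given by its adjacency relation adj
   (x ~ y  iff  adj x y); undirected simple graph = symmetric, irreflexive. *)
Definition undirected_simple {V : Type} (adj : V -> V -> Prop) : Prop :=
  (forall x y, adj x y -> adj y x) /\ (forall x, ~ adj x x).

Definition nbr_vals {R : realType} {V : Type} (adj : V -> V -> Prop)
  (u : V -> R) (x : V) : set (\bar R) :=
  [set (u z)%:E | z in [set z | adj x z]].

Definition inf_laplacian {R : realType} {V : Type} (adj : V -> V -> Prop)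
  (u : V -> R) (x : V) : \bar R :=
  ereal_inf (nbr_vals adj u x) + ereal_sup (nbr_vals adj u x)
  - (2 * u x)%:E.

Inductive walk {V : Type} (adj : V -> V -> Prop) : nat -> V -> V -> Prop :=
| walk0 a : walk adj 0 a a
| walkS n a b c : walk adj n a b -> adj b c -> walk adj n.+1 a c.

(* N <= d(Y,x), where d(Y,x) is the least length of a path from Y to x
   (d(Y,x) = +oo when there is no such path). *)
Definition dist_ge {V : Type} (adj : V -> V -> Prop) (Y : set V) (x : V)
  (N : nat) : Prop :=
  forall n x0, Y x0 -> walk adj n x0 x -> (N <= n)%N.

Definition bounded_on {R : realType} {V : Type} (A : set V) (h : V -> R) : Prop :=
  exists M : R, forall z, A z -> (`|h z| <= M)%R.

(** Put d := u(y) - u(x) and let t > sup_X f. Since Δ∞u(w) = f(w) < t, every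
    w ∈ X with a neighbour z has a neighbour z' with u(w) - u(z') > u(z) - u(w) - t.
    Starting from x_{-1} := y, x_0 := x this builds x_1, ..., x_N with
    x_{k+1} ~ x_k, as long as x_k ∈ X, which holds for k < N <= d(Y,x); the drops
    u(x_k) - u(x_{k+1}) are at least d - (k+1) t, so telescoping gives
    u(x) - inf u >= u(x) - u(x_N) >= N d - t N(N+1)/2.  Let t decrease to sup_X f. *)
From mathcomp Require Import all_boot all_order all_algebra.
From mathcomp Require Import all_classical all_reals.
From mathcomp Require Import ring lra.
Import Order.TTheory GRing.Theory Num.Theory.
Local Open Scope classical_set_scope.
Local Open Scope ring_scope.

Lemma walk_cons {V : Type} (adj : V -> V -> Prop) n a b c :
  walk adj n b c -> adj a b -> walk adj n.+1 a c.
Proof.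
move=> w; elim: w a => [b0|m b0 d c' w IH e] a ab.
  exact: walkS (walk0 _ _) ab.
exact: walkS (IH _ ab) e.
Qed.

Lemma inf_laplacian_nbr_lt {R : realType} {V : Type} {adj : V -> V -> Prop}
    {u : V -> R} {w z : V} {c t : R} :
  inf_laplacian adj u w = c%:E -> c < t -> adj w z ->
  exists2 z', adj w z' & u z' < 2 * u w - u z + t.
Proof.
rewrite /inf_laplacian; set L := nbr_vals adj u w => lapE ct wz.
have Lz : L (u z)%:E by exists z.
have inf_le := ereal_inf_lbound Lz; have le_sup := ereal_sup_ubound Lz.
suff : (ereal_inf L < (2 * u w - u z + t)%:E)%E.
  by case/ereal_inf_lt => _ [z' wz' <-]; rewrite lte_fin; exists z'.
move: lapE inf_le le_sup; case: (ereal_inf L) => [i| |] //.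
case: (ereal_sup L) => [s| |] // lapE.
have {}lapE : i + s - 2 * u w = c by apply/eqP; rewrite -eqe -lapE EFinB EFinD.
rewrite !lee_fin lte_fin; lra.
Qed.

Section Descent.
Context {R : realType} {V : Type} {adj : V -> V -> Prop} {X : set V}.
Context {f u : V -> R} {x y : V} {N : nat} {t : R}.
Hypothesis adj_sym : forall a b, adj a b -> adj b a.
Hypothesis laplacianE : forall w, X w -> inf_laplacian adj u w = (f w)%:E.
Hypothesis f_lt : forall w, X w -> f w < t.
Hypothesis xy : adj x y.
Hypothesis distN : dist_ge adj (~` X) x N.

Let d := u y - u x.

Lemma descent_walk (k : nat) : (k <= N)%N ->
  exists p q, [/\ adj q p, walk adj k q x,
    d - k%:R * t <= u p - u q &
    k%:R * d - t * (k%:R * (k%:R + 1)) / 2 <= u x - u q].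
Proof.
elim: k => [|k IH] kN.
  exists y, x; split; rewrite ?mulr0n /d //; [exact: walk0 | lra | lra].
have [p [q [qp qx dropq gainq]]] := IH (ltnW kN).
have Xq : X q.
  by apply: contrapT => nXq; have := distN _ _ nXq qx; rewrite leqNgt kN.
have [q' qq' dropq'] := inf_laplacian_nbr_lt (laplacianE _ Xq) (f_lt _ Xq) qp.
exists q, q'; split; first exact: adj_sym.
- exact: walk_cons qx (adj_sym _ _ qq').
- rewrite -addn1 natrD; lra.
- rewrite -addn1 natrD; nra.
Qed.

Lemma descent_gain :
  exists q, N%:R * d - t * (N%:R * (N%:R + 1)) / 2 <= u x - u q.
Proof. by have [_ [q [_ _ _ gain]]] := @descent_walk N (leqnn N); exists q. Qed.

End Descent.

Lemma bounded_on_ereal_sup {R : realType} {V : Type} {A : set V} {h : V -> R} {a : V} :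
  bounded_on A h -> A a ->
  exists2 s, ereal_sup [set (h z)%:E | z in A] = s%:E & forall z, A z -> h z <= s.
Proof.
move=> [M hM] Aa; set S := ereal_sup _.
have S_le : (S <= M%:E)%E.
  apply: ge_ereal_sup => _ [z Az <-]; rewrite lee_fin.
  exact: le_trans (ler_norm _) (hM z Az).
have le_S : ((h a)%:E <= S)%E by apply: ereal_sup_ubound; exists a.
move: S_le le_S; case SE: S => [s| |] // _ _; exists s => // z Az.
by rewrite -lee_fin -SE; apply: ereal_sup_ubound; exists z.
Qed.

Lemma le_quadratic_gain (R : realFieldType) (n d a s : R) : 0 < n ->
  (forall t, s < t -> n * d - t * (n * (n + 1)) / 2 <= a) ->
  d <= a / n + (n + 1) / 2 * s.
Proof.
move=> n_gt0 gain; apply/ler_addgt0Pr => e e_gt0.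
have n1_gt0 : 0 < n + 1 by rewrite ltr_wpDr.
have e'_gt0 : 0 < 2 * e / (n + 1) by rewrite divr_gt0 ?mulr_gt0.
have := gain (s + 2 * e / (n + 1)); rewrite ltrDl => /(_ e'_gt0).
have -> : (s + 2 * e / (n + 1)) * (n * (n + 1)) / 2
          = s * (n * (n + 1)) / 2 + e * n by field; rewrite gt_eqF.
have -> : a / n + (n + 1) / 2 * s + e
          = (a + s * (n * (n + 1)) / 2 + e * n) / n by field; rewrite gt_eqF.
rewrite ler_pdivlMr //; lra.
Qed.

Theorem lemma3p1 (R : realType) (V : Type) (adj : V -> V -> Prop)
  (X : set V) (f g u : V -> R) :
  undirected_simple adj ->
  bounded_on X f -> bounded_on (~` X) g ->
  (forall x, X x -> inf_laplacian adj u x = (f x)%:E) ->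
  (forall y, (~` X) y -> u y = g y) ->
  forall (x y : V), X x -> adj x y ->
  forall N : nat, (0 < N)%N -> dist_ge adj (~` X) x N ->
  ((u y - u x)%:E <=
     ((u x)%:E - ereal_inf [set (u v)%:E | v in [set: V]]) * (N%:R^-1)%:E
     + ((N.+1)%:R / 2)%:E * ereal_sup [set (f z)%:E | z in X])%E.
Proof.
move=> [adj_sym _] f_bdd _ laplacianE _ x y Xx xy N N_gt0 distN.
have [s -> f_le] := bounded_on_ereal_sup f_bdd Xx.
have inf_le q : (ereal_inf [set (u v)%:E | v in [set: V]] <= (u q)%:E)%E.
  by apply: ereal_inf_lbound; exists q.
have n_gt0 : 0 < N%:R :> R by rewrite ltr0n.
case: (ereal_inf _) inf_le => [m| |] inf_le; last 2 first.
- by have := inf_le x.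
- by rewrite /= gt0_mulye ?lte_fin ?invr_gt0 // addye ?leey.
rewrite -EFinB -!EFinM -EFinD lee_fin -addn1 natrD.
apply: le_quadratic_gain => // t st.
have f_lt w : X w -> f w < t by move=> Xw; exact: le_lt_trans (f_le w Xw) st.
have [q gain] := descent_gain adj_sym laplacianE f_lt xy distN.
by have := inf_le q; rewrite lee_fin; lra.
Qed.
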